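(* Let $\mathcal{U}=\{u_1,\ldots,u_M\}\subset\mathbb{R}\setminus\{0\}$, $u_{\max}=\max_m|u_m|$, $\sigma_{N/k}^2>0$, and $k\ge1$. For $\omega\in\mathbb{R}$ let $h(\omega)=\sum_{m=1}^M\exp\big(\frac{|u_m|u_{\max}}{\sigma_{N/k}^2}-\frac{u_m^2}{2\sigma_{N/k}^2}+\frac{u_m\omega}{\sigma_{N/k}^2}\big)$. For an integer $n\ge 0$, $\omega_1\in\mathbb{R}^n$ and $s\in\{1,\ldots,n\}$ define $$G_s^n(\omega_1)=\sum_{x'\in\mathcal{X}_s^n(\mathcal{U})}\exp\Big(\frac{u_{\max}\|x'\|_1-\frac12\|x'\|_2^2+x'^{\mathrm{T}}\omega_1}{\sigma_{N/k}^2}\Big),$$ and $G_0^n(\omega_1)=1$. For $0\le a\le b\le n$ let $L_{a,b}^n=\prod_{i=0}^{b-a-1}\frac{b-i}{n-a-i}$ (empty product $=1$). For $j\in\{0,\ldots,k\}$ let $H_0(j)=1$ and, for $w\in\{1,\ldots,k-1\}$, $$H_w(j)=\sum_{w'=\max\{j-w,0\}}^{\min\{j,k-w\}}\binom{j}{w'}\big\lceil L^{k-j}_{k-w-w',\,k-j}\big\rceil.$$ Given $\omega_1\in\mathbb{R}^k$, let $\mathcal{I}=\{j\in\{1,\ldots,k\}: h([\omega_1]_j)\le1\}$ and let $\omega_{1,\mathcal{I}^{\mathrm{c}}}$ be the subvector of $\omega_1$ indexed by $\{1,\ldots,k\}\setminus\mathcal{I}$. Then for all $\omega_1\in\mathbb{R}^k$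 and all $w\in\{0,\ldots,k-1\}$, $$G_{k-w}^k(\omega_1)\le H_w(|\mathcal{I}|)\,G^{k-|\mathcal{I}|}_{k-|\mathcal{I}|}(\omega_{1,\mathcal{I}^{\mathrm{c}}}).$$
   Context: $\mathcal{X}_s^n(\mathcal{U})$ is the set of vectors in $\mathbb{R}^n$ with exactly $s$ nonzero entries, each in $\mathcal{U}$. $\lceil\cdot\rceil$ is the ceiling. *)

From HB Require Import structures.
From mathcomp Require Import all_boot all_order all_algebra.
From mathcomp Require Import reals sequences exp.
Set Implicit Arguments. Unset Strict Implicit. Unset Printing Implicit Defensive.
Import Order.TTheory GRing.Theory Num.Theory.
Local Open Scope ring_scope.

Definition umax (R : realType) (U : seq R) : R := \big[Num.max/0]_(u <- U) `|u|.

(* h(omega); s2 stands for sigma_{N/k}^2 *)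
Definition hfun (R : realType) (U : seq R) (s2 : R) (om : R) : R :=
  \sum_(u <- U) expR (`|u| * umax U / s2 - u ^+ 2 / (2 * s2) + u * om / s2).

(* A vector of R^n whose entries are 0 or in U, encoded by choosing for each
   coordinate either None (entry 0) or an index into U. *)
Definition vec_of (R : realType) (U : seq R) (n : nat)
  (c : {ffun 'I_n -> option 'I_(size U)}) : 'I_n -> R :=
  fun i => if c i is Some m then nth 0 U m else 0.

(* G_s^n(omega_1): sum over X_s^n(U) (vectors with exactly s nonzero entries,
   each in U); G_0^n = 1. *)
Definition Gfun (R : realType) (U : seq R) (s2 : R) (n s : nat) (om : 'I_n -> R) : R :=
  if s == 0%N then 1 else
  \sum_(c : {ffun 'I_n -> option 'I_(size U)} | #|[set i | c i != None]| == s)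
    let x := vec_of c in
    expR ((umax U * (\sum_i `|x i|) - 2^-1 * (\sum_i x i ^+ 2)
           + \sum_i x i * om i) / s2).

Definition Lfun (R : realType) (n a b : nat) : R :=
  \prod_(i < b - a) ((b - i)%:R / (n - a - i)%:R).

Definition Hfun (R : realType) (k w j : nat) : R :=
  if w == 0%N then 1 else
  \sum_(maxn (j - w) 0 <= w' < (minn j (k - w)).+1)
     'C(j, w')%:R * (Num.ceil (Lfun R (k - j) (k - w - w') (k - j)))%:~R.

(* subvector of om indexed by the set A (in increasing order of indices) *)
Definition subvec (R : realType) (k : nat) (A : {set 'I_k}) (om : 'I_k -> R)
  : 'I_#|A| -> R := fun i => om (enum_val i).

Arguments Gfun {R} U s2 n s om.
Arguments subvec {R k} A om _.

(** Expanding [G_s^n] coordinatewise, each coordinate contributes a factor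
    [h(om_i)] if it lies in the support and [1] otherwise, so [G_s^n] is the
    [s]-th elementary symmetric polynomial of the [h(om_i)]; in particular
    [G_m^m] is the product of all of them.  Each of the ['C(k, k - w)] products
    in [G_(k-w)^k] is at most the product of the factors exceeding [1], i.e.
    [G_|I^c|^|I^c|(om_(I^c))].  Finally, [L^(k-j)_(a, k-j)] is the binomial
    coefficient ['C(k - j, a)], so by Vandermonde's identity [H_w(j)] equals
    ['C(k, k - w)]. *)

From HB Require Import structures.
From mathcomp Require Import all_boot all_order all_algebra.
From mathcomp Require Import reals sequences exp.
From mathcomp Require Import ring zify.
Import Order.TTheory GRing.Theory Num.Theory.
Local Open Scope ring_scope.

Lemma sum_ffun_support (R : comNzRingType) (I T : finType)
    (F : I -> option T -> R) (S : {set I}) :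
  (forall i, F i None = 1) ->
  \sum_(c : {ffun I -> option T} | [set i | c i != None] == S)
     \prod_i F i (c i) =
  \prod_(i in S) \sum_(t : T) F i (Some t).
Proof.
move=> F_None.
transitivity (\prod_i \sum_(o | (o != None) == (i \in S)) F i o).
  rewrite bigA_distr_big_dep; apply: eq_bigl => c.
  apply/eqP/familyP => [<- i | suppS]; first by rewrite unfold_in inE.
  by apply/setP => i; rewrite inE; have := suppS i; rewrite unfold_in => /eqP.
rewrite [RHS]big_mkcond; apply: eq_bigr => i _; case: (i \in S).
  rewrite (reindex_omap Some id) /=; last by case.
  by apply: eq_bigl => t; rewrite eqxx.
by rewrite (big_pred1 None) //; case.
Qed.

Section GfunAsElementarySymmetric.
Variables (R : realType) (U : seq R) (s2 : R).
Hypothesis s2_neq0 : s2 != 0.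

Definition coord_exponent (x y : R) : R :=
  `|x| * umax U / s2 - x ^+ 2 / (2 * s2) + x * y / s2.

Lemma coord_exponent0 y : coord_exponent 0 y = 0.
Proof. by rewrite /coord_exponent normr0 expr0n /= !mul0r subr0 addr0. Qed.

Lemma expR_Gfun_exponent n (x om : 'I_n -> R) :
  expR ((umax U * (\sum_i `|x i|) - 2^-1 * (\sum_i x i ^+ 2)
         + \sum_i x i * om i) / s2) =
  \prod_i expR (coord_exponent (x i) (om i)).
Proof.
rewrite -expR_sum; congr expR.
rewrite !mulr_sumr -sumrN -!big_split mulr_suml; apply: eq_bigr => i _ /=.
by rewrite /coord_exponent; field.
Qed.

Lemma Gfun_esym n s (om : 'I_n -> R) :
  Gfun U s2 n s om =
  \sum_(S : {set 'I_n} | #|S| == s) \prod_(i in S) hfun U s2 (om i).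
Proof.
rewrite /Gfun; case: eqP => [-> | _].
  by rewrite (big_pred1 set0) ?big_set0 // => S; rewrite /= cards_eq0.
pose F i (o : option 'I_(size U)) :=
  expR (coord_exponent (if o is Some m then nth 0 U m else 0) (om i)).
rewrite (eq_bigr (fun c : {ffun _ -> _} => \prod_i F i (c i))); last first.
  by move=> c _; rewrite expR_Gfun_exponent.
rewrite (partition_big (fun c : {ffun _} => [set i | c i != None])
           (fun S : {set 'I_n} => #|S| == s)) //.
apply: eq_bigr => S /eqP cardS.
rewrite (eq_bigl (fun c : {ffun _} => [set i | c i != None] == S)); last first.
  by move=> c; case: (_ =P S) => [-> | _]; rewrite ?cardS ?eqxx ?andbF.
rewrite sum_ffun_support; last first.
  by move=> i; rewrite /F coord_exponent0 expR0.
apply: eq_bigr => i _.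
by rewrite /hfun (big_nth 0) big_mkord.
Qed.

Lemma Gfun_full_subvec k (A : {set 'I_k}) (om : 'I_k -> R) :
  Gfun U s2 #|A| #|A| (subvec A om) = \prod_(i in A) hfun U s2 (om i).
Proof.
rewrite Gfun_esym (big_pred1 setT); last first.
  move=> S /=; rewrite eqEcard subsetT cardsT card_ord eqn_leq.
  by have := max_card (mem S); rewrite card_ord => ->.
rewrite (big_enum_val (fun i => hfun U s2 (om i))).
by apply: eq_bigl => i; rewrite inE.
Qed.

End GfunAsElementarySymmetric.

Lemma prod_le_prod_gt1 (R : realDomainType) (I : finType) (f : I -> R)
    (P : {pred I}) :
  (forall i, 0 <= f i) -> \prod_(i in P) f i <= \prod_(i | 1 < f i) f i.
Proof.
move=> f_ge0; pose g i := Num.max 1 (f i).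
have g_ge1 i : 1 <= g i by rewrite le_max lexx.
have prod_g_ge1 (Q : {pred I}) : 1 <= \prod_(i in Q) g i.
  by apply: (big_ind (fun x => 1 <= x)) => // x y; apply: mulr_ege1.
apply: (@le_trans _ _ (\prod_(i in P) g i)).
  by apply: ler_prod => i _; rewrite f_ge0 le_max lexx orbT.
have -> : \prod_(i | 1 < f i) f i = \prod_i g i.
  by rewrite big_mkcond; apply: eq_bigr => i _; rewrite /g maxElt.
rewrite [leRHS](bigID (mem P)) /=.
by rewrite ler_peMr ?prod_g_ge1 // (le_trans ler01).
Qed.

Lemma esym_le_bin_prod_gt1 (R : realDomainType) n s (f : 'I_n -> R) :
  (forall i, 0 <= f i) ->
  \sum_(S : {set 'I_n} | #|S| == s) \prod_(i in S) f i <=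
  'C(n, s)%:R * \prod_(i | 1 < f i) f i.
Proof.
move=> f_ge0.
apply: (@le_trans _ _ (\sum_(S : {set 'I_n} | #|S| == s) \prod_(i | 1 < f i) f i)).
  by apply: ler_sum => S _; apply: prod_le_prod_gt1.
by rewrite sumr_const -cardsE card_draws card_ord mulr_natl.
Qed.

Lemma Lfun_bin (R : realType) b a : (a <= b)%N -> Lfun R b a b = 'C(b, a)%:R.
Proof.
move=> le_ab; rewrite /Lfun prodf_div -!natr_prod.
have -> : (\prod_(i < b - a) (b - a - i))%N = (b - a)`!.
  by rewrite -ffactnn ffact_prod.
have -> : (\prod_(i < b - a) (b - i))%N = b ^_ (b - a) by rewrite ffact_prod.
by rewrite -bin_ffact natrM mulfK ?pnatr_eq0 -?lt0n ?fact_gt0 ?bin_sub.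
Qed.

Lemma Vandermonde_window a b c : (c <= a + b)%N ->
  (\sum_(c - b <= i < (minn a c).+1) 'C(a, i) * 'C(b, c - i))%N = 'C(a + b, c).
Proof.
move=> le_c_ab; rewrite -binomial.Vandermonde.
rewrite -(big_mkord xpredT (fun i => 'C(a, i) * 'C(b, c - i))%N).
rewrite [RHS](big_cat_nat _ (n := (minn a c).+1)) //=; last by lia.
rewrite [X in _ = (_ + X)%N]big1_seq ?addn0; last first.
  move=> i /andP [_]; rewrite mem_index_iota => /andP [lo hi].
  by rewrite bin_small //; lia.
rewrite [RHS](big_cat_nat _ (n := c - b)) //=; last by lia.
rewrite [X in _ = (X + _)%N]big1_seq // => i /andP [_].
rewrite mem_index_iota => /andP [_ hi].
by rewrite [X in (_ * X)%N]bin_small ?muln0 //; lia.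
Qed.

Lemma HfunE (R : realType) k w j : (j <= k)%N ->
  Hfun R k w j = 'C(k, k - w)%:R.
Proof.
move=> le_jk; rewrite /Hfun; case: eqP => [-> | _]; first by rewrite subn0 binn.
have -> : maxn (j - w) 0 = ((k - w) - (k - j))%N by lia.
rewrite -[in 'C(k, _)](subnKC le_jk) -Vandermonde_window ?subnKC ?leq_subr //.
rewrite natr_sum; apply: eq_big_nat => i /andP [lo hi].
rewrite Lfun_bin; last by lia.
by rewrite ceilK ?natr_int // natrM.
Qed.

Theorem lemma5 (R : realType) (U : seq R) (s2 : R) (k : nat)
  (om : 'I_k -> R) (w : nat) :
  uniq U -> all (fun u => u != 0) U -> 0 < s2 -> (1 <= k)%N -> (w < k)%N ->
  let I := [set j : 'I_k | hfun U s2 (om j) <= 1] in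
  Gfun U s2 k (k - w)%N om <=
    Hfun R k w #|I| * Gfun U s2 #|~: I| #|~: I| (subvec (~: I) om).
Proof.
move=> _ _ s2_gt0 _ _; cbv zeta; set I := [set j | _].
have s2_neq0 : s2 != 0 by rewrite gt_eqF.
have h_ge0 x : 0 <= hfun U s2 x by apply: sumr_ge0 => u _; apply: expR_ge0.
have le_Ik : (#|I| <= k)%N by have := max_card (mem I); rewrite card_ord.
rewrite Gfun_esym // Gfun_full_subvec // HfunE //.
rewrite (eq_bigl (fun i => 1 < hfun U s2 (om i))); last first.
  by move=> i; rewrite !inE -ltNge.
exact: esym_le_bin_prod_gt1.
Qed.
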